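(* Let $M$ be an extremally $\aleph_0$-saturated model of a complete affine theory $T$ and let $P,Q:M^n\to[0,\infty)$ be definable predicates. Then $Z(P)\subseteq Z(Q)$ if and only if for every $\epsilon>0$ there is $\lambda\ge0$ such that $Q(\bar x)\le\lambda P(\bar x)+\epsilon$ for all $\bar x\in M^n$.
   Context: Affine continuous logic: $L$-structures are complete metric spaces $(M,d)$ with $d\le1$ and Lipschitz interpretations of function symbols and $[0,1]$-valued relation symbols. Affine formulas are built from $1$ and atomic formulas (including $d$) using only $r\cdot\phi$ ($r\in\mathbb R$), $\phi+\psi$, $\inf_x$, $\sup_x$. For $A\subseteq M$, an $n$-type over $A$ is a maximal set of conditions with parameters from $A$ satisfiable with the theory of $(M,a)_{a\in A}$, identified with a positive normalized linear functional on formulas; a type is extreme if it is an extreme point of the convex set $S_n(A)$. $M$ is extremally $\aleph_0$-saturated if for every finite $A\subseteq M$ every extreme type in $S_n(A)$ is realized in $M$. A predicate $P:M^n\to\mathbb R$ is definable (without parameters) if it is a uniform limit of $\phi_k^M$ for affine formulas $\phi_k$. $Z(P)=\{\bar a\in M^n:P(\bar a)=0\}$. *)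

From Stdlib Require Rdefinitions.
From mathcomp Require Import all_boot all_order all_algebra.
From mathcomp Require Import boolp classical_sets reals Rstruct.

Set Implicit Arguments.
Unset Strict Implicit.
Unset Printing Implicit Defensive.

Import Order.TTheory GRing.Theory Num.Theory.
Local Open Scope ring_scope.
Local Open Scope classical_set_scope.

Notation R := Rdefinitions.R.

Record language := Language {
  funsym : Type;
  relsym : Type;
  farity : funsym -> nat;
  rarity : relsym -> nat }.

Section Syntax.
Variable L : language.

Inductive term : Type :=
  | Var : nat -> term
  | App : forall f : funsym L, ('I_(farity f) -> term) -> term.

(* Affine formulas: built from 1 and atomic formulas (relation symbols and
   the distance d) by r * phi, phi + psi, inf_x, sup_x.  Quantifiers bind the
   de Bruijn variable 0. *)
Inductive formula : Type :=
  | FOne : formula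
  | FRel : forall r : relsym L, ('I_(rarity r) -> term) -> formula
  | FDist : term -> term -> formula
  | FScale : R -> formula -> formula
  | FAdd : formula -> formula -> formula
  | FInf : formula -> formula
  | FSup : formula -> formula.

Fixpoint tbounded (m : nat) (t : term) : Prop :=
  match t with
  | Var i => (i < m)%N
  | App f ts => forall j, tbounded m (ts j)
  end.

Fixpoint fbounded (m : nat) (phi : formula) : Prop :=
  match phi with
  | FOne => True
  | FRel r ts => forall j, tbounded m (ts j)
  | FDist t1 t2 => tbounded m t1 /\ tbounded m t2
  | FScale _ psi => fbounded m psi
  | FAdd psi chi => fbounded m psi /\ fbounded m chi
  | FInf psi => fbounded m.+1 psi
  | FSup psi => fbounded m.+1 psi
  end.
End Syntax.

Arguments Var {L}.
Arguments FOne {L}.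

Record structure (L : language) := Structure {
  carrier :> Type;
  witness : carrier;  (* structures are nonempty *)
  dist : carrier -> carrier -> R;
  dist_ge0 : forall x y, 0 <= dist x y;
  dist_le1 : forall x y, dist x y <= 1;
  dist_eq0 : forall x y, dist x y = 0 <-> x = y;
  dist_sym : forall x y, dist x y = dist y x;
  dist_triangle : forall x y z, dist x z <= dist x y + dist y z;
  dist_complete : forall u : nat -> carrier,
      (forall e : R, 0 < e -> exists N, forall i j, (N <= i)%N -> (N <= j)%N ->
          dist (u i) (u j) < e) ->
      exists l, forall e : R, 0 < e -> exists N, forall i, (N <= i)%N ->
          dist (u i) l < e;
  funI : forall f : funsym L, ('I_(farity f) -> carrier) -> carrier;
  relI : forall r : relsym L, ('I_(rarity r) -> carrier) -> R;
  funI_lipschitz : forall f, exists K : R, forall a b,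
      dist (funI a) (funI b) <= K * \sum_(i < farity f) dist (a i) (b i);
  relI_range : forall r a, 0 <= @relI r a <= 1;
  relI_lipschitz : forall r, exists K : R, forall a b,
      `|@relI r a - @relI r b| <= K * \sum_(i < rarity r) dist (a i) (b i) }.

Section Semantics.
Variables (L : language) (M : structure L).

Definition scons (x : M) (v : nat -> M) : nat -> M :=
  fun i => if i is j.+1 then v j else x.

Fixpoint teval (t : term L) (v : nat -> M) : M :=
  match t with
  | Var i => v i
  | App f ts => funI (fun j => teval (ts j) v)
  end.

Fixpoint feval (phi : formula L) (v : nat -> M) : R :=
  match phi with
  | FOne => 1
  | FRel r ts => relI (fun j => teval (ts j) v)
  | FDist t1 t2 => dist (teval t1 v) (teval t2 v)
  | FScale c psi => c * feval psi v
  | FAdd psi chi => feval psi v + feval chi v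
  | FInf psi => inf (range (fun x : M => feval psi (scons x v)))
  | FSup psi => sup (range (fun x : M => feval psi (scons x v)))
  end.

(* the valuation x_0 .. x_{n-1}, followed by [rest] *)
Definition env (n : nat) (x : 'I_n -> M) (rest : nat -> M) : nat -> M :=
  fun i => oapp x (rest (i - n)%N) (insub i).

Definition default_env : nat -> M := fun _ => witness M.

(* Valuation for formulas in n variables with parameters a_0..a_{k-1}:
   variables 0..n-1 are the x's, variables n..n+k-1 are the parameters.
   (Variables >= n+k never occur in the formulas considered.) *)
Definition penv (n k : nat) (a : 'I_k -> M) (x : 'I_n -> M) : nat -> M :=
  env x (env a default_env).

(* S_n(A): positive normalized linear functionals on the affine formulas
   phi(x_0..x_{n-1}, a_0..a_{k-1}); positivity is with respect to the affine
   theory of (M,a)_{a in A}: T_A |= phi >= 0 iff phi >= 0 on all of M^n.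
   The functional is (by convention) 0 on formulas that are not of this form. *)
Definition type_space (n k : nat) (a : 'I_k -> M) : set (formula L -> R) :=
  [set p | [/\ forall phi, ~ fbounded (n + k) phi -> p phi = 0,
      p FOne = 1,
      forall c phi, fbounded (n + k) phi -> p (FScale c phi) = c * p phi,
      forall phi psi, fbounded (n + k) phi -> fbounded (n + k) psi ->
          p (FAdd phi psi) = p phi + p psi &
      forall phi, fbounded (n + k) phi ->
          (forall x : 'I_n -> M, 0 <= feval phi (penv a x)) -> 0 <= p phi]].

Definition extreme_in (S : set (formula L -> R)) (p : formula L -> R) : Prop :=
  S p /\ forall q1 q2 (t : R), S q1 -> S q2 -> 0 < t < 1 ->
    (forall phi, p phi = t * q1 phi + (1 - t) * q2 phi) ->
    forall phi, q1 phi = p phi /\ q2 phi = p phi.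

Definition realizes (n k : nat) (a : 'I_k -> M) (b : 'I_n -> M)
    (p : formula L -> R) : Prop :=
  forall phi, fbounded (n + k) phi -> p phi = feval phi (penv a b).

Definition extremally_aleph0_saturated : Prop :=
  forall (k : nat) (a : 'I_k -> M) (n : nat) (p : formula L -> R),
    extreme_in (type_space n a) p -> exists b : 'I_n -> M, realizes a b p.

Definition definable (n : nat) (P : ('I_n -> M) -> R) : Prop :=
  exists phis : nat -> formula L,
    (forall j, fbounded n (phis j)) /\
    forall e : R, 0 < e -> exists N, forall j, (N <= j)%N ->
      forall x : 'I_n -> M, `|P x - feval (phis j) (env x default_env)| <= e.

Definition zero_set (n : nat) (P : ('I_n -> M) -> R) : set ('I_n -> M) :=
  [set x | P x = 0].

End Semantics.

(* If the bound fails for some [eps], there are tuples [x_m] with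
   [m * P x_m + eps < Q x_m].  Definable predicates extend to affine upper
   semicontinuous functions on the compact convex space of types [S_n], so a
   cluster point of the types of the [x_m] has extended [P] equal to [0] and
   extended [Q] at least [eps].  As extended [P] is nonnegative, its zero set
   is a closed face of [S_n]; the face where extended [Q] is maximal on it
   contains an extreme point (a minimal closed face is a point, since each
   coordinate is constant on it).  Extreme types are realized by
   saturation, giving [b] with [P b = 0 < eps <= Q b]. *)

From mathcomp Require Import all_boot all_order all_algebra.
From mathcomp Require Import boolp classical_sets reals Rstruct.
From mathcomp Require Import all_classical all_reals topology normedtype Rstruct_topology.
From mathcomp Require Import lra.
Import Order.TTheory GRing.Theory Num.Theory.
Import ArrowAsProduct.

Set Implicit Arguments.
Unset Strict Implicit.
Unset Printing Implicit Defensive.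
Local Open Scope ring_scope.
Local Open Scope classical_set_scope.

Lemma compact_directed_meet (T : topologicalType) (K : set T) (J : Type)
    (D : set J) (g : J -> set T) :
  compact K -> D !=set0 ->
  (forall j, D j -> closed (K `&` g j)) ->
  (forall j, D j -> (K `&` g j) !=set0) ->
  (forall i j, D i -> D j -> exists2 k, D k & g k `<=` g i `&` g j) ->
  exists2 x, K x & forall j, D j -> g j x.
Proof.
move=> cK [j0 Dj0] g_closed g_neq0 g_dir.
pose G j := K `&` g j.
have G_filter : ProperFilter (filter_from D G).
  apply: filter_from_proper => //; apply: filter_from_filter; first by exists j0.
  move=> i j Di Dj; have [k Dk gk] := g_dir i j Di Dj.
  by exists k => // x [Kx /gk[gix gjx]].
have [x [Kx clx]] := cK _ G_filter (ex_intro2 _ _ j0 Dj0 (@subIsetl _ K (g j0))).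
exists x => // j Dj.
have : closure (G j) x by move=> B nB; apply: clx => //; exists j.
by move/(g_closed j Dj) => [].
Qed.

Corollary compact_nested_meet (T : topologicalType) (K : set T) (g : nat -> set T) :
  compact K ->
  (forall m, closed (K `&` g m)) -> (forall m, (K `&` g m) !=set0) ->
  (forall i j, (i <= j)%N -> g j `<=` g i) ->
  exists2 x, K x & forall m, g m x.
Proof.
move=> cK g_closed g_neq0 g_nested.
have [||||x Kx gx] := @compact_directed_meet _ K nat setT g cK.
- by exists 0%N.
- by move=> m _; exact: g_closed.
- by move=> m _; exact: g_neq0.
- move=> i j _ _; exists (maxn i j) => // x gx.
  by split; apply: g_nested gx; [exact: leq_maxl|exact: leq_maxr].
- by exists x => // m; exact: gx.
Qed.

Definition inv_succ (m : nat) : R := (m.+1%:R)^-1.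

Lemma inv_succ_gt0 m : 0 < inv_succ m.
Proof. by rewrite invr_gt0 ltr0Sn. Qed.

Lemma inv_succ_le i j : (i <= j)%N -> inv_succ j <= inv_succ i.
Proof. by move=> ij; rewrite lef_pV2 ?posrE ?ltr0n // ler_nat ltnS. Qed.

Lemma inv_succ_mul m : inv_succ m * m.+1%:R = 1.
Proof. by rewrite mulVf // pnatr_eq0. Qed.

Lemma le_inv_succ (k c y : R) : 0 <= k ->
  (forall m, c - k * inv_succ m <= y) -> c <= y.
Proof.
move=> k0 H; rewrite leNgt; apply/negP => yc.
have k1 : 0 < k + 1 by lra.
have d0 : 0 < (c - y) / (k + 1) by rewrite divr_gt0 // subr_gt0.
have [m hm] := ltr_add_invr d0.
have := H m; have := inv_succ_gt0 m; rewrite /inv_succ.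
move: hm; set e := (m.+1%:R)^-1; rewrite ltr_pdivlMr // => hm e0 hy.
nra.
Qed.

Section ClosedSets.
Variable I : eqType.
Local Notation X := (I -> R).

Lemma closed_eq_cont (f g : X -> R) : continuous f -> continuous g ->
  closed [set p | f p = g p].
Proof.
move=> f_cont g_cont.
rewrite (_ : [set p | f p = g p] = (fun p => f p - g p) @^-1` [set 0]); last first.
  by apply/seteqP; split => p /= => [->|/eqP]; [rewrite subrr|rewrite subr_eq0 => /eqP].
apply: preimage_closed => [p _|]; last exact: closed_eq.
exact: (@continuousB _ R^o _ f g _ (f_cont p) (g_cont p)).
Qed.

Lemma closed_coord_ge (i : I) (c : R) : closed [set p : X | c <= p i].
Proof.
rewrite (_ : [set p | c <= p i] = proj i @^-1` [set x | c <= x]) //.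
by apply: preimage_closed => [p _|]; [exact: proj_continuous|exact: closed_ge].
Qed.

Lemma closed_coord_le (i : I) (c : R) : closed [set p : X | p i <= c].
Proof.
rewrite (_ : [set p | p i <= c] = proj i @^-1` [set x | x <= c]) //.
by apply: preimage_closed => [p _|]; [exact: proj_continuous|exact: closed_le].
Qed.

Lemma closed_implies (P : Prop) (A : set X) : closed A -> closed [set p | P -> A p].
Proof.
case: (pselect P) => [HP|HP] A_closed.
  rewrite (_ : [set p | P -> A p] = A) //.
  by apply/seteqP; split => p /=; [move/(_ HP)|move=> Ap _].
rewrite (_ : [set p | P -> A p] = setT); first exact: closedT.
by apply/seteqP; split => p // _ /HP.
Qed.

Lemma closed_forall (J : Type) (A : J -> set X) :
  (forall j, closed (A j)) -> closed [set p | forall j, A j p].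
Proof.
move=> A_closed; rewrite (_ : [set p | _] = \bigcap_(j in setT) A j).
  by apply: closed_bigI => j _.
by apply/seteqP; split => p /= pA j //; exact: pA.
Qed.

Lemma closed_and5 (A B C D E : set X) : closed A -> closed B -> closed C ->
  closed D -> closed E -> closed [set p | [/\ A p, B p, C p, D p & E p]].
Proof.
move=> *; rewrite (_ : [set p | _] = A `&` (B `&` (C `&` (D `&` E)))).
  by repeat apply: closedI.
by apply/seteqP; split => p /=; [case|move=> [? [? [? []]]]].
Qed.

End ClosedSets.

Section Faces.
Variable I : eqType.
Local Notation X := (I -> R).
Variable K : set X.
Hypothesis K_compact : compact K.
Hypothesis K_coord_ub : forall i, exists B, forall p, K p -> p i <= B.

Let K_closed : closed K.
Proof.
apply: compact_closed K_compact; apply: hausdorff_product => _.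
exact: (@norm_hausdorff _ R^o).
Qed.

Definition convex_comb (t : R) (q1 q2 r : X) :=
  forall i, r i = t * q1 i + (1 - t) * q2 i.

Definition face (F : set X) := F `<=` K /\
  forall q1 q2 r t, K q1 -> K q2 -> 0 < t < 1 -> convex_comb t q1 q2 r -> F r ->
    F q1 /\ F q2.

Definition closed_face (F : set X) := [/\ F !=set0, closed F & face F].

Definition extreme_point (p : X) := K p /\
  forall q1 q2 t, K q1 -> K q2 -> 0 < t < 1 -> convex_comb t q1 q2 p ->
    forall i, q1 i = p i /\ q2 i = p i.

Definition affine_on (f : X -> R) :=
  forall q1 q2 r t, K q1 -> K q2 -> K r -> 0 < t < 1 -> convex_comb t q1 q2 r ->
    f r = t * f q1 + (1 - t) * f q2.

Definition affine_usc (f : X -> R) := [/\ affine_on f,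
  forall c, closed (K `&` [set p | c <= f p]) &
  exists B, forall p, K p -> f p <= B].

Lemma closed_face_superlevel F f c :
  closed_face F -> affine_on f -> closed (K `&` [set p | c <= f p]) ->
  (forall p, F p -> f p <= c) -> (F `&` [set p | c <= f p]) !=set0 ->
  closed_face (F `&` [set p | c <= f p]).
Proof.
move=> [_ F_closed [FK F_face]] f_aff f_closed f_ub F'_neq0; split => //.
  have -> : F `&` [set p | c <= f p] = F `&` (K `&` [set p | c <= f p]).
    by rewrite setIA (setIidl FK).
  exact: closedI.
split=> [p [/FK]//|q1 q2 r t Kq1 Kq2 t01 qr [Fr cfr]].
have [Fq1 Fq2] := F_face _ _ _ _ Kq1 Kq2 t01 qr Fr.
move: cfr; rewrite /= (f_aff _ _ _ _ Kq1 Kq2 (FK _ Fr) t01 qr) => cfr.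
have := f_ub _ Fq1; have := f_ub _ Fq2; case/andP: t01 => t0 t1.
by split; split => //=; nra.
Qed.

Lemma closed_face_argmax F f : closed_face F -> affine_usc f ->
  exists c, (forall p, F p -> f p <= c) /\ closed_face (F `&` [set p | c <= f p]).
Proof.
move=> F_face [f_aff f_closed [B f_ub]].
have [[p0 Fp0] F_closed [FK _]] := F_face.
have f_sup : has_sup (f @` F).
  by split; [exists (f p0), p0|exists B => _ [p /FK Kp <-]; exact: f_ub].
set c := sup (f @` F).
have c_ub p : F p -> f p <= c.
  by move=> Fp; exact: (ub_le_sup f_sup.2) (ex_intro2 _ _ p Fp erefl).
exists c; split => //; apply: closed_face_superlevel => //.
pose g m := F `&` [set p | c - inv_succ m <= f p].
have [m|m|i j ij|p Kp gp] := @compact_nested_meet _ K g K_compact.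
- have -> : K `&` g m = F `&` (K `&` [set p | c - inv_succ m <= f p]).
    by rewrite setICA.
  exact: closedI.
- have [_ [p Fp <-] cp] := sup_adherent (inv_succ_gt0 m) f_sup.
  by exists p; split; [exact: FK|split => //; exact: ltW].
- move=> p [Fp fp]; split => //=; apply: le_trans fp.
  by rewrite lerD2l lerN2; exact: inv_succ_le.
- exists p; split; first by case: (gp 0%N).
  by apply: (@le_inv_succ 1) => // m; rewrite mul1r; case: (gp m).
Qed.

Lemma coord_affine_usc i : affine_usc (fun p => p i).
Proof.
split=> [q1 q2 r t _ _ _ _|c|]; [exact|apply: closedI => //|exact: K_coord_ub].
exact: closed_coord_ge.
Qed.

Lemma closed_face_chain_meet (J : Type) (D : set J) (g : J -> set X) :
  D !=set0 -> (forall j, D j -> closed_face (g j)) ->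
  (forall i j, D i -> D j -> g i `<=` g j \/ g j `<=` g i) ->
  closed_face (\bigcap_(j in D) g j).
Proof.
move=> [j0 Dj0] g_face g_chain.
have gK j : D j -> g j `<=` K by case/g_face => _ _ [].
split.
- have [|j Dj|j Dj|i j Di Dj|x _ gx] := @compact_directed_meet _ K J D g K_compact.
  + by exists j0.
  + by rewrite (setIidr (gK j Dj)); case: (g_face j Dj).
  + by case: (g_face j Dj) => -[x gx] _ _; exists x; split => //; exact: (gK j).
  + case: (g_chain i j Di Dj) => gij; [exists i|exists j] => // x gx.
    * by split => //; exact: gij.
    * by split => //; exact: gij.
  + by exists x.
- by apply: closed_bigI => j Dj; case: (g_face j Dj).
- split=> [x /(_ j0 Dj0)|q1 q2 r t Kq1 Kq2 t01 qr gr]; first exact: (gK j0).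
  split=> j Dj; have [_ _ [_ gf]] := g_face j Dj.
  - by case: (gf _ _ _ _ Kq1 Kq2 t01 qr (gr j Dj)).
  - by case: (gf _ _ _ _ Kq1 Kq2 t01 qr (gr j Dj)).
Qed.

Lemma minimal_closed_face F : closed_face F ->
  exists2 G, closed_face G /\ G `<=` F &
    forall H, closed_face H -> H `<=` G -> H = G.
Proof.
move=> F_face.
pose T := {G : set X | closed_face G /\ G `<=` F}.
pose refines (A B : T) := `[< sval B `<=` sval A >].
have [[G [G_face GF]] G_min] : exists G, forall H, refines G H -> H = G.
  apply: Zorn => [A|A B C /asboolP AB /asboolP BC|[A hA] [B hB] /asboolP AB /asboolP BA|
                  C C_chain].
  - exact/asboolP.
  - by apply/asboolP; exact: subset_trans BC AB.
  - have AB_eq : A = B by apply/seteqP.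
    by subst B; congr exist; exact: Prop_irrelevance.
  - pose g (o : option T) := if o is Some A then sval A else F.
    pose D (o : option T) := if o is Some A then C A else True.
    have g_face o : D o -> closed_face (g o) by case: o => [[A []]|].
    have gF o : D o -> g o `<=` F by case: o => [[A [_ AF]] _|_ x] //=.
    have meet_face : closed_face (\bigcap_(o in D) g o).
      apply: closed_face_chain_meet => [|//|[A|] [B|] DA DB]; first by exists None.
      + by case: (C_chain A B DA DB) => /asboolP; [right|left].
      + by left; exact: (gF (Some A)).
      + by right; exact: (gF (Some B)).
      + by left.
    have meetF : \bigcap_(o in D) g o `<=` F by move=> x /(_ None Logic.I).
    exists (exist _ _ (conj meet_face meetF) : T) => A CA.
    by apply/asboolP => x gx; exact: gx (Some A) CA.
exists G => // H H_face HG.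
have HF : H `<=` F by move=> x /HG /GF.
by have [] := G_min (exist _ H (conj H_face HF)) (asboolT HG).
Qed.

Lemma minimal_closed_face_eq G : closed_face G ->
  (forall H, closed_face H -> H `<=` G -> H = G) ->
  forall p q, G p -> G q -> p = q.
Proof.
move=> G_face G_min p q Gp Gq; apply/funext => i.
have [c [c_ub G'_face]] := closed_face_argmax G_face (coord_affine_usc i).
have G'_eq := G_min _ G'_face (@subIsetl _ _ _).
have [_ /= cp] : (G `&` [set p | c <= p i]) p by rewrite G'_eq.
have [_ /= cq] : (G `&` [set p | c <= p i]) q by rewrite G'_eq.
by have := c_ub _ Gp; have := c_ub _ Gq; lra.
Qed.

Lemma closed_face_extreme_point F : closed_face F -> exists2 p, F p & extreme_point p.
Proof.
move=> F_face; have [G [G_face GF] G_min] := minimal_closed_face F_face.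
have [[p Gp] _ [GK G_face']] := G_face.
exists p; first exact: GF.
split=> [|q1 q2 t Kq1 Kq2 t01 qp i]; first exact: GK.
have [Gq1 Gq2] := G_face' _ _ _ _ Kq1 Kq2 t01 qp Gp.
have G_eq := minimal_closed_face_eq G_face G_min.
by rewrite (G_eq _ _ Gq1 Gp) (G_eq _ _ Gq2 Gp).
Qed.
End Faces.

Lemma range_sup_inf_norm_le (T : Type) (t : T) (f : T -> R) (B : R) :
  (forall x, `|f x| <= B) -> `|sup (range f)| <= B /\ `|inf (range f)| <= B.
Proof.
move=> fB; have f_neq0 : range f !=set0 by exists (f t), t.
have f_ub : ubound (range f) B.
  by move=> _ [x _ <-]; move: (fB x); rewrite ler_norml => /andP[].
have f_lb : lbound (range f) (- B).
  by move=> _ [x _ <-]; move: (fB x); rewrite ler_norml => /andP[].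
have [y fy] := f_neq0.
have norm_le s : - B <= s -> s <= B -> `|s| <= B.
  by move=> Bs sB; rewrite ler_norml Bs sB.
split; apply: norm_le.
- exact: le_trans (f_lb _ fy) (ub_le_sup (ex_intro _ B f_ub) fy).
- exact: ge_sup.
- exact: lb_le_inf.
- exact: le_trans (ge_inf (ex_intro _ (- B) f_lb) fy) (f_ub _ fy).
Qed.

Lemma feval_bounded (L : language) (M : structure L) (phi : formula L) :
  exists B : R, forall v : nat -> M, `|feval phi v| <= B.
Proof.
elim: phi => [|r ts|t1 t2|c psi [B psiB]|psi [B1 psiB1] chi [B2 chiB2]
             |psi [B psiB]|psi [B psiB]] /=.
- by exists 1 => v; rewrite normr1.
- exists 1 => v; have /andP[r0 r1] := relI_range (fun j => teval (ts j) v).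
  by rewrite ger0_norm.
- by exists 1 => v; rewrite ger0_norm ?dist_ge0 ?dist_le1.
- by exists (`|c| * B) => v; rewrite normrM ler_wpM2l.
- exists (B1 + B2) => v.
  exact: le_trans (ler_normD _ _) (lerD (psiB1 v) (chiB2 v)).
- exists B => v.
  by case: (range_sup_inf_norm_le (witness M) (fun x => psiB (scons x v))).
- exists B => v.
  by case: (range_sup_inf_norm_le (witness M) (fun x => psiB (scons x v))).
Qed.

Section TypeSpace.
Variables (L : language) (M : structure L) (n : nat).

Definition no_params : 'I_0 -> M := fun _ => witness M.

Definition Sn : set ({classic (formula L)} -> R) := type_space n no_params.

Lemma penv_no_params (x : 'I_n -> M) : penv no_params x = env x (default_env M).
Proof. by apply/funext => i; rewrite /penv /env; case: insub. Qed.

Definition realized_type (x : 'I_n -> M) : formula L -> R :=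
  fun phi => if `[< fbounded (n + 0) phi >] then feval phi (penv no_params x) else 0.

Lemma realized_type_in x : Sn (realized_type x).
Proof.
rewrite /realized_type; split=> [phi /asboolPn/negbTE->//||c phi b|phi psi b1 b2|phi b].
- by rewrite asboolT.
- by rewrite !asboolT.
- by rewrite !asboolT //.
- by rewrite asboolT.
Qed.

Lemma realized_type_realizes x : realizes no_params x (realized_type x).
Proof. by move=> phi b; rewrite /realized_type asboolT. Qed.

Lemma Sn_le p phi psi e : Sn p -> fbounded (n + 0) phi -> fbounded (n + 0) psi ->
  (forall x : 'I_n -> M, feval phi (penv no_params x) <= feval psi (penv no_params x) + e) ->
  p phi <= p psi + e.
Proof.
move=> [_ p1 pZ pD p_ge0] b_phi b_psi phi_le.
pose chi := FAdd (FAdd psi (FScale e FOne)) (FScale (-1) phi).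
have : 0 <= p chi by apply: p_ge0 => [//|x /=]; have := phi_le x; lra.
by rewrite !pD ?pZ ?p1 //=; lra.
Qed.

Lemma Sn_norm_le phi : exists B : R, forall p, Sn p -> `|p phi| <= B.
Proof.
have [B phiB] := feval_bounded M phi.
exists B => p Sp; have [p0 _ pZ _ _] := Sp.
have [b_phi|/p0->] := pselect (fbounded (n + 0) phi); last first.
  by rewrite normr0; exact: le_trans (phiB (default_env M)).
have b0 : fbounded (n + 0) (FScale 0 (@FOne L)) by [].
have p_zero : p (FScale 0 FOne) = 0 by rewrite pZ // mul0r.
have phiB' (x : 'I_n -> M) : - B <= feval phi (penv no_params x) <= B by rewrite -ler_norml.
have up : p phi <= p (FScale 0 FOne) + B.
  by apply: Sn_le => // x /=; case/andP: (phiB' x); lra.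
have lo : p (FScale 0 FOne) <= p phi + B.
  by apply: Sn_le => // x /=; case/andP: (phiB' x); lra.
by rewrite p_zero in up lo; rewrite ler_norml; apply/andP; split; lra.
Qed.

Lemma Sn_closed : closed Sn.
Proof.
have coord_cont (phi : {classic (formula L)}) : continuous (fun p : _ -> R => p phi).
  by move=> p; exact: proj_continuous.
apply: closed_and5.
- apply: closed_forall => phi; apply: closed_implies.
  exact: closed_eq_cont (coord_cont phi) (@cst_continuous _ R^o 0).
- exact: closed_eq_cont (coord_cont FOne) (@cst_continuous _ R^o 1).
- apply: closed_forall => c; apply: closed_forall => phi; apply: closed_implies.
  apply: closed_eq_cont => [|p]; first exact: coord_cont.
  apply: (@continuousM R _ (fun=> c) (fun p => p phi) p).
    exact: cst_continuous.
  exact: coord_cont.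
- apply: closed_forall => phi; apply: closed_forall => psi.
  apply: closed_implies; apply: closed_implies.
  apply: closed_eq_cont => [|p]; first exact: coord_cont.
  exact: (@continuousD _ R^o _ _ _ _ (coord_cont phi p) (coord_cont psi p)).
- apply: closed_forall => phi; apply: closed_implies; apply: closed_implies.
  exact: closed_coord_ge.
Qed.

Lemma Sn_compact : compact Sn.
Proof.
have [B SnB] := choice (fun phi : {classic (formula L)} => Sn_norm_le phi).
pose box := [set p : {classic (formula L)} -> R | forall phi, `[- B phi, B phi] (p phi)].
have box_compact : compact box.
  exact: (tychonoff (fun phi => @segment_compact R (- B phi) (B phi))).
apply: (subclosed_compact Sn_closed box_compact).
by move=> p Sp phi; have := SnB phi p Sp; rewrite ler_norml /= in_itv.
Qed.

End TypeSpace.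

Section DefinableExtension.
Variables (L : language) (M : structure L) (n : nat).
Variables (Q : ('I_n -> M) -> R) (psi : nat -> formula L).
Hypothesis psi_bounded : forall m, fbounded n (psi m).
Hypothesis psi_approx :
  forall m x, `|Q x - feval (psi m) (env x (default_env M))| <= inv_succ m.

Local Notation Sn := (Sn M n).

Let psi_bounded0 m : fbounded (n + 0) (psi m).
Proof. by rewrite addn0. Qed.

Let psi_approx0 m x : - inv_succ m <= Q x - feval (psi m) (penv (no_params M) x) <= inv_succ m.
Proof. by rewrite penv_no_params -ler_norml. Qed.

Lemma Sn_psi_le p m l : Sn p -> p (psi m) <= p (psi l) + (inv_succ m + inv_succ l).
Proof.
move=> Sp; apply: (Sn_le Sp) => // x.
by case/andP: (psi_approx0 m x); case/andP: (psi_approx0 l x); lra.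
Qed.

(* By [Sn_psi_le], [p (psi m)] is Cauchy, and this sup is its limit. *)
Definition type_pred (p : formula L -> R) : R :=
  sup (range (fun m => p (psi m) - inv_succ m)).

Lemma type_pred_approx p l : Sn p ->
  p (psi l) - inv_succ l <= type_pred p <= p (psi l) + inv_succ l.
Proof.
move=> Sp.
have ub l' : ubound (range (fun m => p (psi m) - inv_succ m)) (p (psi l') + inv_succ l').
  by move=> _ [m _ <-]; have := Sn_psi_le m l' Sp; lra.
apply/andP; split; first by apply: (ub_le_sup (ex_intro _ _ (ub l))); exists l.
by apply: ge_sup; [exists (p (psi 0%N) - inv_succ 0%N), 0%N|exact: ub].
Qed.

Lemma type_pred_affine : affine_on Sn type_pred.
Proof.
move=> q1 q2 r t Sq1 Sq2 Sr /andP[t0 t1] qr.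
apply/eqP; rewrite eq_le; apply/andP; split; rewrite -subr_ge0;
  apply: (@le_inv_succ 2) => // m; have := inv_succ_gt0 m;
  have := type_pred_approx m Sq1; have := type_pred_approx m Sq2;
  have := type_pred_approx m Sr; rewrite qr; set u := inv_succ m;
  move=> /andP[? ?] /andP[? ?] /andP[? ?] ?; nra.
Qed.

Lemma type_pred_closed_ge c : closed (Sn `&` [set p | c <= type_pred p]).
Proof.
rewrite (_ : _ `&` _ = Sn `&` [set p | forall l, c - inv_succ l <= p (psi l)]).
  by apply: closedI; [exact: Sn_closed|apply: closed_forall => l; exact: closed_coord_ge].
apply/seteqP; split=> p [Sp /= cp]; split=> //=.
  by move=> l; have := type_pred_approx l Sp; lra.
by apply: (@le_inv_succ 2) => // m; have := cp m; have := type_pred_approx m Sp; lra.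
Qed.

Lemma type_pred_closed_le c : closed (Sn `&` [set p | type_pred p <= c]).
Proof.
rewrite (_ : _ `&` _ = Sn `&` [set p | forall l, p (psi l) <= c + inv_succ l]).
  by apply: closedI; [exact: Sn_closed|apply: closed_forall => l; exact: closed_coord_le].
apply/seteqP; split=> p [Sp /= cp]; split=> //=.
  by move=> l; have := type_pred_approx l Sp; lra.
rewrite -lerN2; apply: (@le_inv_succ 2) => // m.
by have := cp m; have := type_pred_approx m Sp; lra.
Qed.

Lemma type_pred_bounded : exists B, forall p, Sn p -> `|type_pred p| <= B.
Proof.
have [B SnB] := Sn_norm_le M n (psi 0%N).
exists (B + inv_succ 0%N) => p Sp; have := type_pred_approx 0%N Sp.
by have := SnB p Sp; rewrite !ler_norml => /andP[? ?] /andP[? ?]; apply/andP; split; lra.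
Qed.

Lemma type_pred_affine_usc : affine_usc Sn type_pred.
Proof.
split; [exact: type_pred_affine|exact: type_pred_closed_ge|].
by have [B predB] := type_pred_bounded; exists B => p /predB; rewrite ler_norml => /andP[].
Qed.

Lemma type_pred_realizes p b : Sn p -> realizes (no_params M) b p -> type_pred p = Q b.
Proof.
move=> Sp pb; apply/eqP; rewrite eq_le; apply/andP; split;
  apply: (@le_inv_succ 2) => // m; have := type_pred_approx m Sp;
  have := psi_approx0 m b; rewrite pb //; lra.
Qed.

Lemma type_pred_realized_type x : type_pred (realized_type x) = Q x.
Proof. exact: type_pred_realizes (realized_type_in x) (realized_type_realizes x). Qed.

Lemma type_pred_ge0 : (forall x, 0 <= Q x) -> forall p, Sn p -> 0 <= type_pred p.
Proof.
move=> Q_ge0 p Sp; have [_ _ pZ _ _] := Sp.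
have p_zero : p (FScale 0 FOne) = 0 by rewrite pZ // mul0r.
apply: (@le_inv_succ 2) => // m; have := type_pred_approx m Sp.
have : p (FScale 0 FOne) <= p (psi m) + inv_succ m.
  by apply: (Sn_le Sp) => // x /=; have := Q_ge0 x; have := psi_approx0 m x; lra.
by rewrite p_zero; lra.
Qed.

End DefinableExtension.

Section ZeroSets.
Variables (L : language) (M : structure L) (n : nat).
Variables (P Q : ('I_n -> M) -> R) (psiP psiQ : nat -> formula L).
Hypothesis psiP_bounded : forall m, fbounded n (psiP m).
Hypothesis psiQ_bounded : forall m, fbounded n (psiQ m).
Hypothesis psiP_approx :
  forall m x, `|P x - feval (psiP m) (env x (default_env M))| <= inv_succ m.
Hypothesis psiQ_approx :
  forall m x, `|Q x - feval (psiQ m) (env x (default_env M))| <= inv_succ m.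
Hypothesis P_ge0 : forall x, 0 <= P x.

Local Notation Sn := (Sn M n).
Local Notation hatP := (type_pred psiP).
Local Notation hatQ := (type_pred psiQ).

Lemma type_of_unbounded_ratio (B eps : R) (xs : nat -> 'I_n -> M) : 0 < eps ->
  (forall x, Q x <= B) -> (forall m, m%:R * P (xs m) + eps < Q (xs m)) ->
  exists2 p, Sn p & hatP p <= 0 /\ eps <= hatQ p.
Proof.
move=> eps0 QB xsPQ.
have B0 : 0 <= B by have := xsPQ 0%N; have := QB (xs 0%N); rewrite mul0r; lra.
pose g m := [set p | hatP p <= B * inv_succ m] `&` [set p | eps <= hatQ p].
have [m|m|i j ij|p Sp gp] := compact_nested_meet (g := g) (@Sn_compact L M n).
- rewrite (_ : _ `&` _ = (Sn `&` [set p | hatP p <= B * inv_succ m]) `&`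
                         (Sn `&` [set p | eps <= hatQ p])).
    by apply: closedI; [exact: type_pred_closed_le|exact: type_pred_closed_ge].
  by rewrite setIACA setIid.
- exists (realized_type (xs m.+1)); split; first exact: realized_type_in.
  rewrite /g /= (type_pred_realized_type psiP_bounded psiP_approx).
  rewrite (type_pred_realized_type psiQ_bounded psiQ_approx).
  have := xsPQ m.+1; have := QB (xs m.+1); have := P_ge0 (xs m.+1).
  have := inv_succ_mul m; have := inv_succ_gt0 m; have := ler0n R m.+1.
  by move: (m.+1%:R) (inv_succ m) => k u; split; nra.
- move=> p [/= Pp Qp]; split=> //=; apply: le_trans Pp _.
  by rewrite ler_wpM2l // inv_succ_le.
- exists p => //; split; last by case: (gp 0%N).
  by rewrite -oppr_ge0; apply: (@le_inv_succ B) => // m; case: (gp m) => /= Pp _; lra.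
Qed.

Lemma extreme_type_in_zero_set eps p1 : Sn p1 -> hatP p1 <= 0 -> eps <= hatQ p1 ->
  exists2 p, extreme_point Sn p & hatP p = 0 /\ eps <= hatQ p.
Proof.
move=> Sp1 Pp1 Qp1.
have Sn_ub phi : exists B, forall p, Sn p -> p phi <= B.
  by have [B SnB] := Sn_norm_le M n phi; exists B => p /SnB; rewrite ler_norml => /andP[].
have hatP_ge0 := type_pred_ge0 psiP_bounded psiP_approx P_ge0.
(* As [hatP >= 0] on [Sn], its zero set is the face where [- hatP] is maximal. *)
pose G1 := Sn `&` [set p | 0 <= - hatP p].
have G1_face : closed_face Sn G1.
  apply: closed_face_superlevel => [|q1 q2 r t Sq1 Sq2 Sr t01 qr||p /hatP_ge0|].
  - by split; [exists p1|exact: Sn_closed|split].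
  - by rewrite (type_pred_affine psiP_bounded psiP_approx Sq1 Sq2 Sr t01 qr); lra.
  - rewrite (_ : _ `&` _ = Sn `&` [set p | hatP p <= 0]).
      exact: type_pred_closed_le.
    by apply/seteqP; split=> p [Sp /= Pp]; split => //=; lra.
  - by lra.
  - by exists p1; split => //=; lra.
have [c [c_ub G2_face]] := closed_face_argmax (@Sn_compact L M n) G1_face
  (type_pred_affine_usc psiQ_bounded psiQ_approx).
have [p [[Sp /= Pp] /= Qp] p_ext] :=
  closed_face_extreme_point (@Sn_compact L M n) Sn_ub G2_face.
exists p => //; split; first by have := hatP_ge0 p Sp; lra.
by apply: le_trans Qp; apply: le_trans Qp1 (c_ub _ _); split => //=; lra.
Qed.

End ZeroSets.

Lemma definable_approx (L : language) (M : structure L) (n : nat)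
    (Q : ('I_n -> M) -> R) : definable Q ->
  exists psi : nat -> formula L, (forall m, fbounded n (psi m)) /\
    forall m x, `|Q x - feval (psi m) (env x (default_env M))| <= inv_succ m.
Proof.
move=> [phis [phis_bounded phis_approx]].
have [N phisN] := choice (fun m => phis_approx _ (inv_succ_gt0 m)).
by exists (fun m => phis (N m)); split=> // m x; exact: phisN.
Qed.

Theorem mainTheorem17 (L : language) (M : structure L) (n : nat)
    (P Q : ('I_n -> M) -> R) :
  extremally_aleph0_saturated M ->
  definable P -> definable Q ->
  (forall x, 0 <= P x) -> (forall x, 0 <= Q x) ->
  (zero_set P `<=` zero_set Q <->
   forall eps : R, 0 < eps ->
     exists lam : R, 0 <= lam /\ forall x, Q x <= lam * P x + eps).
Proof.
move=> M_sat /definable_approx[psiP [psiP_b psiP_a]]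
  /definable_approx[psiQ [psiQ_b psiQ_a]] P_ge0 Q_ge0.
split=> [ZPQ eps eps0|PQ_bound x /= Px]; last first.
  apply/eqP; rewrite eq_le Q_ge0 andbT leNgt; apply/negP => Qx.
  have [lam [_ /(_ x)]] := PQ_bound _ (divr_gt0 Qx (ltr0Sn _ 1)).
  by rewrite Px mulr0 add0r; lra.
apply: contrapT => no_lam.
have unbounded_at m : exists x, m%:R * P x + eps < Q x.
  apply: contrapT => no_x; apply: no_lam; exists m%:R; split=> // x.
  by rewrite leNgt; apply/negP => lt; apply: no_x; exists x.
have [xs xsPQ] := choice unbounded_at.
have [B QB] : exists B, forall x, Q x <= B.
  have [B hatQB] := type_pred_bounded psiQ_b psiQ_a; exists B => x.
  rewrite -(type_pred_realized_type psiQ_b psiQ_a).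
  by have := hatQB _ (realized_type_in x); rewrite ler_norml => /andP[].
have [p1 Sp1 [Pp1 Qp1]] :=
  type_of_unbounded_ratio psiP_b psiQ_b psiP_a psiQ_a P_ge0 eps0 QB xsPQ.
have [p [Sp p_ext] [Pp Qp]] :=
  extreme_type_in_zero_set psiP_b psiQ_b psiP_a psiQ_a P_ge0 Sp1 Pp1 Qp1.
have [b pb] := M_sat 0%N (no_params M) n p (conj Sp p_ext).
rewrite (type_pred_realizes psiP_b psiP_a Sp pb) in Pp.
rewrite (type_pred_realizes psiQ_b psiQ_a Sp pb) (ZPQ b Pp) in Qp.
by lra.
Qed.
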